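(* Let $m\ge 1$, let $\lambda_2\ge 0$, and let $f_1\ge f_2\ge\cdots\ge f_m$ be real numbers. Then there exist real numbers $\tau_{ij}\in[-\lambda_2,\lambda_2]$ for $i\ne j\in\{1,\dots,m\}$, satisfying $\tau_{ij}=-\tau_{ji}$ for all $i\neq j$, such that $$f_i+\sum_{j\in\{1,\dots,m\}\setminus\{i\}}\tau_{ij}=0,\qquad i=1,\dots,m,$$ if and only if $$\sum_{j=1}^{k}f_j\le\lambda_2 k(m-k)\quad\text{for }k=1,\dots,m-1,$$ and $\sum_{j=1}^{m}f_j=0$. *)

From mathcomp Require Import all_boot all_order all_algebra.
From mathcomp Require Import reals.

(* Read [f] as demands on the vertices of the complete graph on [m] vertices
   and [tau] as an antisymmetric flow with capacity [lam] on every edge; the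
   theorem is a max-flow/min-cut statement for this graph.

   Necessity: summing the balance equations over an initial segment [0, k),
   the flow inside the segment cancels by antisymmetry, so the sum equals the
   flow across the cut, at most [lam * k * (m - k)]; [k = m] gives total 0.

   Sufficiency, by induction on the number of vertices: the last vertex [n]
   has the smallest value, so its deficit [- f n] lies in [0, n * lam].  By
   the intermediate value theorem there is a level [c] such that the
   transfers [t j = clamp (f j - c)] (truncation to [0, lam]) from the other
   vertices cover it exactly ("water filling").  The residual demands
   [f j - t j] are again nonincreasing and sum to 0.  Their cut conditions
   hold directly where all earlier transfers are saturated or all later ones
   vanish; in between the residual is constant, so the slack of the cut
   condition is strictly concave there, and a discrete minimum principle
   concludes. *)

From mathcomp Require Import all_boot all_order all_algebra.
From mathcomp Require Import boolp reals topology normedtype.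
From mathcomp Require Import ring lra.
Import Order.TTheory GRing.Theory Num.Theory.
Import numFieldNormedType.Exports.

Set Implicit Arguments.
Unset Strict Implicit.
Unset Printing Implicit Defensive.
Local Open Scope ring_scope.

Section Definitions.
Variables (R : realDomainType) (lam : R).

Definition balancing (n : nat) (f : nat -> R) (tau : nat -> nat -> R) : Prop :=
  [/\ forall i j, (i < n)%N -> (j < n)%N -> i != j -> - lam <= tau i j <= lam,
      forall i j, (i < n)%N -> (j < n)%N -> i != j -> tau i j = - tau j i &
      forall i, (i < n)%N -> f i + \sum_(0 <= j < n | j != i) tau i j = 0].

Definition cut_bounded (n : nat) (f : nat -> R) : Prop :=
  forall k, (k <= n)%N -> \sum_(0 <= j < k) f j <= lam * k%:R * (n - k)%:R.

Definition cut_slack (n : nat) (f : nat -> R) (k : nat) : R :=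
  lam * k%:R * (n - k)%:R - \sum_(0 <= j < k) f j.

End Definitions.

Definition nonincreasing {R : realDomainType} (n : nat) (f : nat -> R) : Prop :=
  forall i j, (i <= j < n)%N -> f j <= f i.

Section Necessity.
Variables (R : realDomainType) (lam : R).

Lemma antisym_double_sum (tau : nat -> nat -> R) k :
  (forall i j, (i < k)%N -> (j < k)%N -> i != j -> tau i j = - tau j i) ->
  \sum_(0 <= i < k) \sum_(0 <= j < k | j != i) tau i j = 0.
Proof.
move=> tau_anti; set Y := \sum_(0 <= i < k) _.
suff : Y = - Y by lra.
rewrite {1}/Y; under eq_bigr do rewrite big_mkcond.
rewrite exchange_big /= /Y -sumrN; apply: eq_big_nat => i /andP[_ hi].
rewrite -sumrN [RHS]big_mkcond; apply: eq_big_nat => j /andP[_ hj] /=.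
by case: (eqVneq i j) => [->|ij] //=; apply: tau_anti; rewrite // eq_sym.
Qed.

Lemma prefix_sum_cut n f tau k : balancing lam n f tau -> (k <= n)%N ->
  \sum_(0 <= i < k) f i = - \sum_(0 <= i < k) \sum_(k <= j < n) tau i j.
Proof.
case=> _ tau_anti tau_bal kn.
have -> : \sum_(0 <= i < k) f i =
    - \sum_(0 <= i < k) \sum_(0 <= j < n | j != i) tau i j.
  rewrite -sumrN; apply: eq_big_nat => i /andP[_ ik].
  by have := tau_bal i (leq_trans ik kn); lra.
have split_inner i : (0 <= i < k)%N -> \sum_(0 <= j < n | j != i) tau i j =
    \sum_(0 <= j < k | j != i) tau i j + \sum_(k <= j < n) tau i j.
  move=> /andP[_ ik]; rewrite (big_cat_nat (leq0n k) kn) /=; congr (_ + _).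
  rewrite big_nat_cond [RHS]big_nat_cond; apply: eq_bigl => j /=.
  case: (boolP (k <= j < n)%N) => //= /andP[kj _].
  by apply/eqP => ji; move: ik; rewrite -ji ltnNge kj.
rewrite (eq_big_nat _ _ split_inner) big_split /= antisym_double_sum ?add0r //.
by move=> i j ik jk; apply: tau_anti; apply: leq_trans kn.
Qed.

Lemma balancing_cut_bounded n f tau : balancing lam n f tau ->
  cut_bounded lam n f /\ \sum_(0 <= i < n) f i = 0.
Proof.
move=> bal; split; last first.
  by rewrite (prefix_sum_cut bal (leqnn n)) big1 ?oppr0 // => i _; rewrite big_geq.
move=> k kn; rewrite (prefix_sum_cut bal kn) -sumrN.
have [tau_bd _ _] := bal.
have cross i j : (i < k)%N -> (k <= j < n)%N -> - tau i j <= lam.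
  move=> ik /andP[kj jn]; have ij : i != j by rewrite neq_ltn (leq_trans ik kj).
  by have /andP[] := tau_bd i j (leq_trans ik kn) jn ij; lra.
apply: (@le_trans _ _ (\sum_(0 <= i < k) \sum_(k <= j < n) lam)).
  apply: ler_sum_nat => i /andP[_ ik]; rewrite -sumrN.
  by apply: ler_sum_nat => j /cross; apply.
by rewrite !sumr_const_nat subn0 !mulr_natr -!mulrnA mulnC.
Qed.

End Necessity.

Lemma min_principle (R : realDomainType) (D : nat -> R) (n : nat) :
  0 <= D 0%N -> 0 <= D n ->
  (forall k, (k.+2 <= n)%N -> D k.+1 < 0 -> D k + D k.+2 < D k.+1 *+ 2) ->
  forall k, (k <= n)%N -> 0 <= D k.
Proof.
move=> D0 Dn concave.
have [/= k0 _ k0_min] := arg_minP (fun i : 'I_n.+1 => D i) (isT : xpredT ord0).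
have {k0_min} le_min j : (j <= n)%N -> D k0 <= D j.
  by rewrite -ltnS => hj; exact: (k0_min (Ordinal hj)).
suff Dk0 : 0 <= D k0 by move=> k /le_min; exact: le_trans.
rewrite leNgt; apply/negP => Dk0_neg.
case: k0 le_min Dk0_neg => [[|k] /= hk] le_min Dk0_neg.
  by move: Dk0_neg; rewrite ltNge D0.
have [kn|nk] := ltnP k.+1 n; last first.
  have k_last : k.+1 = n by apply/eqP; rewrite eqn_leq nk -ltnS hk.
  by move: Dk0_neg; rewrite k_last ltNge Dn.
have := concave k kn Dk0_neg.
have := le_min k (ltnW (ltnW kn)); have := le_min k.+2 kn; lra.
Qed.

Lemma cut_slack_second_difference (R : realDomainType) (lam : R) n f k :
  (k.+2 <= n)%N ->
  cut_slack lam n f k + cut_slack lam n f k.+2 - cut_slack lam n f k.+1 *+ 2 =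
  f k - f k.+1 - lam *+ 2.
Proof.
move=> kn; rewrite /cut_slack !big_nat_recr //=.
rewrite !natrB ?(ltnW kn) ?(ltnW (ltnW kn)) //.
by rewrite -addn1 -addn2 !natrD; ring.
Qed.

Section Clamp.
Variables (R : realType) (lam : R).
Hypothesis lam_ge0 : 0 <= lam.

Definition clamp (x : R) : R := Num.min lam (Num.max 0 x).

Lemma clampE x : clamp x = if x <= 0 then 0 else if x <= lam then x else lam.
Proof.
move: lam_ge0; rewrite /clamp maxEle; case: (leP 0 x) => h1; rewrite minEle;
  case: (leP lam x) => h2; case: (leP lam 0) => h3;
  case: (leP x 0) => h4; case: (leP x lam) => h5; lra.
Qed.

Lemma clamp_ge0 x : 0 <= clamp x.
Proof.
move: lam_ge0; rewrite clampE; case: (leP x 0) => hx0; case: (leP x lam) => hxl; lra.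
Qed.

Lemma clamp_le x : clamp x <= lam.
Proof.
move: lam_ge0; rewrite clampE; case: (leP x 0) => hx0; case: (leP x lam) => hxl; lra.
Qed.

Lemma clamp_nondecr x y : x <= y -> clamp x <= clamp y.
Proof.
move: lam_ge0; rewrite !clampE => lam0 xy.
case: (leP x 0) => hx0; case: (leP x lam) => hxl;
  case: (leP y 0) => hy0; case: (leP y lam) => hyl; lra.
Qed.

Lemma clamp_lipschitz x y : x <= y -> clamp y - clamp x <= y - x.
Proof.
move: lam_ge0; rewrite !clampE => lam0 xy.
case: (leP x 0) => hx0; case: (leP x lam) => hxl;
  case: (leP y 0) => hy0; case: (leP y lam) => hyl; lra.
Qed.

Lemma clamp_mid x : 0 < clamp x < lam -> clamp x = x.
Proof.
move: lam_ge0; rewrite clampE; case: (leP x 0) => hx0; case: (leP x lam) => hxl; lra.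
Qed.

Lemma clamp_top x : lam <= x -> clamp x = lam.
Proof.
move: lam_ge0; rewrite clampE; case: (leP x 0) => hx0; case: (leP x lam) => hxl; lra.
Qed.

Lemma clamp_bot x : x <= 0 -> clamp x = 0.
Proof. by rewrite clampE => ->. Qed.

Lemma clamp_sum_continuous (h : nat -> R) n :
  continuous (fun c : R => \sum_(0 <= j < n) clamp (h j - c)).
Proof.
elim: n => [|n IH] x.
  under eq_fun do rewrite big_geq //.
  exact: cvg_cst.
under eq_fun do rewrite big_nat_recr //=.
apply: (continuousD (IH x)).
apply: continuous_min; first exact: cvg_cst.
apply: continuous_max; first exact: cvg_cst.
by apply: continuousB; [exact: cvg_cst | exact: cvg_id].
Qed.

Lemma water_level (h : nat -> R) n r : 0 <= r <= n%:R * lam ->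
  exists c, \sum_(0 <= j < n) clamp (h j - c) = r.
Proof.
move=> /andP[r_ge0 r_le].
pose M := \big[Num.max/0]_(j <- index_iota 0 n) `|h j|.
have M_ge0 : 0 <= M := bigmax_ge_id _ _ _ _.
have h_bound j : (j < n)%N -> - M <= h j <= M.
  move=> hj; rewrite -ler_norml.
  by apply: (le_bigmax_seq 0 j xpredT (fun j => `|h j|)); rewrite ?mem_index_iota.
pose F c := \sum_(0 <= j < n) clamp (h j - c).
have F_low : F (- M - lam) = n%:R * lam.
  rewrite /F (eq_big_nat _ _ (F2 := fun=> lam)) ?sumr_const_nat ?subn0 ?mulr_natl //.
  by move=> j /andP[_ /h_bound/andP[hl hu]]; apply: clamp_top; lra.
have F_high : F M = 0.
  rewrite /F big_nat big1 // => j /andP[_ /h_bound/andP[hl hu]].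
  by apply: clamp_bot; lra.
have interval_ok : - M - lam <= M by move: lam_ge0; lra.
have [||c _ Fc] := IVT (f := F) (v := r) interval_ok.
- by apply: continuous_subspaceT; exact: clamp_sum_continuous.
- have nlam_ge0 : 0 <= n%:R * lam by rewrite mulr_ge0.
  by rewrite F_low F_high (min_r nlam_ge0) (max_l nlam_ge0) r_ge0 r_le.
- by exists c.
Qed.

End Clamp.

Section Extension.
Variables (R : realDomainType) (lam : R).

Definition extend_flow (n : nat) (t : nat -> R) (tau : nat -> nat -> R) :
    nat -> nat -> R :=
  fun i j => if i == n then t j else if j == n then - t i else tau i j.

Lemma balancing_extend n (f t : nat -> R) tau :
  (forall j, 0 <= t j <= lam) -> balancing lam n (fun j => f j - t j) tau ->
  f n + \sum_(0 <= j < n) t j = 0 -> balancing lam n.+1 f (extend_flow n t tau).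
Proof.
move=> t_bd [tau_bd tau_anti tau_bal] covered.
have lt_last i : (i < n.+1)%N -> i != n -> (i < n)%N.
  by move=> im i_n; rewrite ltn_neqAle i_n -ltnS.
split=> [i j im jm ij|i j im jm ij|i im]; rewrite /extend_flow /=.
- have [_|i_n] := eqVneq i n; first by have /andP[] := t_bd j; lra.
  have [_|j_n] := eqVneq j n; first by have /andP[] := t_bd i; lra.
  exact: tau_bd (lt_last i im i_n) (lt_last j jm j_n) ij.
- have [ein|i_n] := eqVneq i n.
    by subst i; rewrite (eq_sym j) (negbTE ij) opprK.
  have [_|j_n] := eqVneq j n; first by [].
  exact: tau_anti (lt_last i im i_n) (lt_last j jm j_n) ij.
- rewrite big_mkcond big_nat_recr //=.
  have [->|i_n] := eqVneq i n.
    rewrite /= addr0 -[RHS]covered; congr (_ + _).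
    by apply: eq_big_nat => j /andP[_ jn]; rewrite (ltn_eqF jn).
  have := tau_bal i (lt_last i im i_n); rewrite big_mkcond /=.
  have -> : \sum_(0 <= j < n) (if j != i then if j == n then - t i else tau i j else 0)
      = \sum_(0 <= j < n) (if j != i then tau i j else 0).
    by apply: eq_big_nat => j /andP[_ jn]; rewrite (ltn_eqF jn).
  rewrite eqxx; lra.
Qed.

End Extension.

Section Sufficiency.
Variables (R : realType) (lam : R).
Hypothesis lam_ge0 : 0 <= lam.

Lemma last_deficit_bounds n (f : nat -> R) :
  nonincreasing n.+1 f -> cut_bounded lam n.+1 f -> \sum_(0 <= j < n.+1) f j = 0 ->
  0 <= - f n <= n%:R * lam.
Proof.
move=> f_noninc f_cut f_total; apply/andP; split.
  have : \sum_(0 <= j < n.+1) f n <= \sum_(0 <= j < n.+1) f j.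
    by apply: ler_sum_nat => j /andP[_ jn]; apply: f_noninc; rewrite -ltnS jn /=.
  rewrite sumr_const_nat f_total subn0 -mulr_natr => fn_le.
  by rewrite oppr_ge0 -(pmulr_lle0 _ (ltr0Sn R n)).
have := f_cut n (leqnSn n); rewrite subSnn mulr1.
by move: f_total; rewrite big_nat_recr //=; lra.
Qed.

Section Residual.
Variables (n : nat) (f : nat -> R) (c : R).
Hypotheses (f_noninc : nonincreasing n.+1 f) (f_cut : cut_bounded lam n.+1 f)
  (f_total : \sum_(0 <= j < n.+1) f j = 0)
  (level : \sum_(0 <= j < n) clamp lam (f j - c) = - f n).

Let t j := clamp lam (f j - c).
Let residual j := f j - t j.

Lemma transfer_noninc i j : (i <= j < n.+1)%N -> t j <= t i.
Proof. by move=> /f_noninc fij; apply: clamp_nondecr => //; lra. Qed.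

Lemma residual_noninc : nonincreasing n residual.
Proof.
move=> i j /andP[ij jn]; have fji : f j <= f i by apply: f_noninc; rewrite ij ltnW.
have fc : f j - c <= f i - c by lra.
by have := clamp_lipschitz lam_ge0 fc; rewrite /residual /t; lra.
Qed.

Lemma residual_total : \sum_(0 <= j < n) residual j = 0.
Proof. by move: f_total; rewrite /residual sumrB level big_nat_recr //=; lra. Qed.

Lemma residual_cut_saturated k :
  (k <= n)%N -> (forall j, (j < k)%N -> t j = lam) ->
  \sum_(0 <= j < k) residual j <= lam * k%:R * (n - k)%:R.
Proof.
move=> kn saturated; rewrite /residual sumrB.
have -> : \sum_(0 <= j < k) t j = k%:R * lam.
  rewrite mulr_natl -[in RHS](subn0 k) -sumr_const_nat.
  by apply: eq_big_nat => j /andP[_ /saturated].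
by have := f_cut (leqW kn); rewrite subSn // -natr1 natrB //; lra.
Qed.

Lemma residual_cut_idle k :
  (k <= n)%N -> (forall j, (k <= j < n)%N -> t j = 0) ->
  \sum_(0 <= j < k) residual j <= lam * k%:R * (n - k)%:R.
Proof.
move=> kn idle; rewrite /residual sumrB.
have Tk : \sum_(0 <= j < k) t j = - f n.
  rewrite -level (big_cat_nat (leq0n k) kn) /= [X in _ = _ + X]big_nat_cond.
  by rewrite [X in _ = _ + X]big1 ?addr0 // => j /andP[/idle].
have Tk_le : \sum_(0 <= j < k) t j <= k%:R * lam.
  rewrite mulr_natl -[in X in _ <= X](subn0 k) -sumr_const_nat.
  by apply: ler_sum_nat => j _; exact: clamp_le.
have tail_ge : (n - k)%:R * f n <= \sum_(k <= j < n) f j.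
  rewrite mulr_natl -sumr_const_nat; apply: ler_sum_nat => j /andP[_ jn].
  by apply: f_noninc; rewrite (ltnW jn) ltnSn.
have nk_ge0 : 0 <= (n - k)%:R :> R by rewrite ler0n.
have := ler_wpM2l nk_ge0 Tk_le; rewrite Tk.
move: f_total; rewrite big_nat_recr //= (big_cat_nat (leq0n k) kn) /=.
by rewrite mulrCA; lra.
Qed.

(* Minimum principle for the slack: at an interior negative point, the
   transfers around it are neither saturated nor zero, so the residual is
   constant [= c] there and the slack is strictly concave. *)
Lemma residual_cut_bounded : cut_bounded lam n residual.
Proof.
move=> k kn; rewrite -subr_ge0.
apply: (@min_principle _ (cut_slack lam n residual) n) kn.
- by rewrite /cut_slack big_geq // mulr0 mul0r subr0.
- by rewrite /cut_slack subnn mulr0 residual_total subr0.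
move=> k' kn' slack_neg.
have [sat|unsat] := eqVneq (t k') lam.
  suff : 0 <= cut_slack lam n residual k'.+1 by rewrite leNgt slack_neg.
  rewrite subr_ge0; apply: residual_cut_saturated; first exact: ltnW.
  move=> j; rewrite ltnS => jk; apply/eqP; rewrite eq_le (clamp_le lam_ge0) -sat.
  by apply: transfer_noninc; rewrite jk /= ltnS ltnW // ltnW.
have [idle|busy] := eqVneq (t k'.+1) 0.
  suff : 0 <= cut_slack lam n residual k'.+1 by rewrite leNgt slack_neg.
  rewrite subr_ge0; apply: residual_cut_idle; first exact: ltnW.
  move=> j /andP[kj jn].
  apply/eqP; rewrite eq_le (clamp_ge0 lam_ge0) andbT -idle.
  by apply: transfer_noninc; rewrite kj ltnS ltnW.
have t_mono := transfer_noninc (i := k') (j := k'.+1).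
have /t_mono t_k'k : (k' <= k'.+1 < n.+1)%N by rewrite leqnSn ltnS ltnW.
have t_pos : 0 < t k'.+1 by rewrite lt_neqAle eq_sym busy (clamp_ge0 lam_ge0).
have t_lt : t k' < lam by rewrite lt_neqAle unsat (clamp_le lam_ge0).
have eq_k' : t k' = f k' - c.
  by apply: clamp_mid => //; rewrite (lt_le_trans t_pos t_k'k).
have eq_k'1 : t k'.+1 = f k'.+1 - c.
  by apply: clamp_mid => //; rewrite t_pos (le_lt_trans t_k'k).
have lam_pos : 0 < lam by apply: lt_le_trans t_pos (clamp_le lam_ge0 _).
rewrite -subr_lt0 cut_slack_second_difference // /residual eq_k' eq_k'1; lra.
Qed.

End Residual.

Lemma cut_bounded_balancing n (f : nat -> R) :
  nonincreasing n f -> cut_bounded lam n f -> \sum_(0 <= j < n) f j = 0 ->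
  exists tau, balancing lam n f tau.
Proof.
elim: n f => [|n IH] f f_noninc f_cut f_total.
  by exists (fun _ _ => 0); split => i.
have deficit := last_deficit_bounds f_noninc f_cut f_total.
have [c level] := water_level lam_ge0 f deficit.
have [tau bal] := IH _ (residual_noninc c f_noninc)
  (residual_cut_bounded f_noninc f_cut f_total level) (residual_total f_total level).
exists (extend_flow n (fun j => clamp lam (f j - c)) tau).
apply: balancing_extend bal _ => [j|]; first by rewrite clamp_ge0 ?clamp_le.
by rewrite level addrN.
Qed.

Theorem balancing_iff_cut_bounded n (f : nat -> R) : nonincreasing n f ->
  (exists tau, balancing lam n f tau) <->
  cut_bounded lam n f /\ \sum_(0 <= j < n) f j = 0.
Proof.
move=> f_noninc; split => [[tau /balancing_cut_bounded] //|[f_cut f_total]].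
exact: cut_bounded_balancing.
Qed.

End Sufficiency.

Section OrdinalIndexing.
Variables (R : realDomainType) (m : nat).

Definition ext_ord (F : 'I_m -> R) (j : nat) : R :=
  if insub j is Some i then F i else 0.

Lemma ext_ordE F (i : 'I_m) : ext_ord F i = F i.
Proof. by rewrite /ext_ord valK. Qed.

Lemma ext_ord_noninc (f : 'I_m -> R) :
  (forall i j : 'I_m, (i <= j)%N -> f j <= f i) -> nonincreasing m (ext_ord f).
Proof.
move=> f_noninc i j /andP[ij jm]; have im := leq_ltn_trans ij jm.
rewrite -[i]/(nat_of_ord (Ordinal im)) -[j]/(nat_of_ord (Ordinal jm)).
by rewrite !ext_ordE f_noninc.
Qed.

Lemma balancing_ord (lam : R) (f : 'I_m -> R) :
  (exists tau : 'I_m -> 'I_m -> R,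
     (forall i j : 'I_m, i != j -> - lam <= tau i j <= lam) /\
     (forall i j : 'I_m, i != j -> tau i j = - tau j i) /\
     (forall i : 'I_m, f i + \sum_(j : 'I_m | j != i) tau i j = 0)) <->
  exists tau, balancing lam m (ext_ord f) tau.
Proof.
have sum_neq (F : nat -> R) (i : 'I_m) :
    \sum_(j : 'I_m | j != i) F j = \sum_(0 <= j < m | j != i) F j.
  by rewrite big_mkord; apply: eq_bigl => j; rewrite val_eqE.
split=> [[tau [tau_bd [tau_anti tau_bal]]]|[tau [tau_bd tau_anti tau_bal]]].
  exists (fun a b => ext_ord (fun i => ext_ord (tau i) b) a).
  have tauE (i j : 'I_m) : ext_ord (fun i => ext_ord (tau i) j) i = tau i j.
    by rewrite !ext_ordE.
  split=> [a b am bm|a b am bm|a am].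
  - rewrite -[a]/(nat_of_ord (Ordinal am)) -[b]/(nat_of_ord (Ordinal bm)).
    by rewrite val_eqE tauE; exact: tau_bd.
  - rewrite -[a]/(nat_of_ord (Ordinal am)) -[b]/(nat_of_ord (Ordinal bm)).
    by rewrite val_eqE !tauE; exact: tau_anti.
  - rewrite -[a]/(nat_of_ord (Ordinal am)) ext_ordE -sum_neq.
    rewrite -[RHS](tau_bal (Ordinal am)).
    by congr (_ + _); apply: eq_bigr => j _; rewrite tauE.
exists (fun i j : 'I_m => tau i j); split; [|split].
- by move=> i j ij; apply: tau_bd; rewrite ?ltn_ord ?val_eqE.
- by move=> i j ij; apply: tau_anti; rewrite ?ltn_ord ?val_eqE.
- by move=> i; rewrite -ext_ordE sum_neq; exact: tau_bal.
Qed.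

Lemma cut_conditions_ord (lam : R) (f : 'I_m -> R) :
  ((forall k : nat, (1 <= k <= m.-1)%N ->
      \sum_(j : 'I_m | (j < k)%N) f j <= lam * k%:R * (m - k)%:R) /\
   \sum_(j : 'I_m) f j = 0) <->
  cut_bounded lam m (ext_ord f) /\ \sum_(0 <= j < m) ext_ord f j = 0.
Proof.
have sum_prefix k : (k <= m)%N ->
    \sum_(j : 'I_m | (j < k)%N) f j = \sum_(0 <= j < k) ext_ord f j.
  move=> km; rewrite (big_nat_widen _ _ _ _ _ km) big_mkord.
  by apply: eq_bigr => j _; rewrite ext_ordE.
have sum_all : \sum_(j : 'I_m) f j = \sum_(0 <= j < m) ext_ord f j.
  by rewrite big_mkord; apply: eq_bigr => j _; rewrite ext_ordE.
rewrite sum_all; split=> [[f_cut f_total]|[f_cut f_total]]; split=> // k.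
  case: k => [|k] km; first by rewrite big_geq // mulr0 mul0r.
  have [->|k_lt] := eqVneq k.+1 m; first by rewrite f_total subnn mulr0.
  rewrite -sum_prefix //; apply: f_cut.
  by rewrite /= -ltnS prednK ?(leq_ltn_trans (leq0n k) km) // ltn_neqAle k_lt.
case/andP=> _ km; have km' := leq_trans km (leq_pred m).
by rewrite sum_prefix //; exact: f_cut.
Qed.

End OrdinalIndexing.

Theorem corollary1 (R : realType) (m : nat) (lambda2 : R) (f : 'I_m -> R) :
  (1 <= m)%N ->
  0 <= lambda2 ->
  (forall i j : 'I_m, (i <= j)%N -> f j <= f i) ->
  ((exists tau : 'I_m -> 'I_m -> R,
       (forall i j : 'I_m, i != j -> - lambda2 <= tau i j <= lambda2) /\
       (forall i j : 'I_m, i != j -> tau i j = - tau j i) /\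
       (forall i : 'I_m, f i + \sum_(j : 'I_m | j != i) tau i j = 0))
   <->
   ((forall k : nat, (1 <= k <= m.-1)%N ->
       \sum_(j : 'I_m | (j < k)%N) f j <= lambda2 * k%:R * (m - k)%:R) /\
    \sum_(j : 'I_m) f j = 0)).
Proof.
move=> _ lambda2_ge0 f_noninc.
apply: (iff_trans (balancing_ord lambda2 f)).
apply: (iff_trans _ (iff_sym (cut_conditions_ord lambda2 f))).
exact: balancing_iff_cut_bounded (ext_ord_noninc f_noninc).
Qed.
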